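(* Let $B=(\vec{e}_{\vec{k}(1)},\dots,\vec{e}_{\vec{k}(d)})$ be basis blades of $\mathcal{G}^{p,q}$, let $\vec{A}=\sum_{\vec{j}}a_{\vec{j}}\vec{e}_{\vec{j}}\in\mathcal{G}^{p,q}$, and for $\vec{l}\in\{0,1\}^d$ define $\vec c^{\vec{l}}(B)=\bigcap_{\nu=1}^d\vec c^{l_\nu}(\vec{e}_{\vec{k}(\nu)})$. Then the sets $\vec c^{\vec l}(B)$, $\vec l\in\{0,1\}^d$, are pairwise disjoint with union the set of all multi-indices $\vec j\subseteq\{1,\dots,n\}$, and for every $\vec l\in\{0,1\}^d$, $$\vec{A}_{\vec c^{\vec{l}}(B)}=\sum_{\vec{j}\in\vec c^{\vec{l}}(B)}a_{\vec{j}}\vec{e}_{\vec{j}}.$$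
   Context: $\mathcal{G}^{p,q}$ ($n=p+q$) is the real geometric algebra generated by orthonormal $\vec e_1,\dots,\vec e_n$ with $\vec e_j^2=1$ ($j\le p$), $\vec e_j^2=-1$ ($j>p$), $\vec e_j\vec e_k=-\vec e_k\vec e_j$ ($j\neq k$); $\vec e_{\vec j}=\vec e_{j_1}\cdots\vec e_{j_\iota}$ for $\vec j=\{j_1<\dots<j_\iota\}$, $\vec e_\emptyset=1$. For a basis blade $\vec e_{\vec k}$: $\vec c^0(\vec{e}_{\vec{k}})=\{\vec{j}:|\vec j||\vec k|-|\vec j\cap\vec k|\text{ even}\}$, $\vec c^1(\vec{e}_{\vec{k}})=\{\vec{j}:|\vec j||\vec k|-|\vec j\cap\vec k|\text{ odd}\}$. For invertible $\vec B$: $\vec{A}_{\vec c^0(\vec{B})}=\frac12(\vec{A}+\vec{B}^{-1}\vec{A}\vec{B})$, $\vec{A}_{\vec c^1(\vec{B})}=\frac12(\vec{A}-\vec{B}^{-1}\vec{A}\vec{B})$, and for a tuple $(\vec B_1,\dots,\vec B_d)$ and $\vec l\in\{0,1\}^d$: $\vec{A}_{\vec c^{\vec{l}}(\vec B_1,\dots,\vec B_d)}=((\vec{A}_{\vec c^{l_1}(\vec{B}_1)})_{\vec c^{l_2}(\vec{B}_2)}\cdots)_{\vec c^{l_d}(\vec{B}_d)}$. *)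

From HB Require Import structures.
From mathcomp Require Import all_boot all_order all_algebra.
From mathcomp Require Import reals.
Set Implicit Arguments. Unset Strict Implicit. Unset Printing Implicit Defensive.
Import Order.TTheory GRing.Theory Num.Theory.
Local Open Scope ring_scope.

(* Generators e_1..e_n are indexed by 'I_n (0-based: generator i : 'I_n is
   e_{i+1}); a multi-index j = {j1 < ... < j_iota} is a {set 'I_n}.
   An element of G^{p,q} is its coefficient family (a_j)_j. *)
Notation GA R n := {ffun {set 'I_n} -> R^o}.

Definition blade (R : realType) (n : nat) (J : {set 'I_n}) : GA R n :=
  [ffun J' => (J' == J)%:R].

(* e_J e_K = bsign J K * e_{J symmetric-difference K}:
   one sign (-1) for each pair j in J, k in K with k < j (anticommutation),
   and one sign (-1) for each common generator with square -1
   (i.e. 0-based index >= p, that is e_j with j > p). *)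
Definition bsign (R : realType) (p q : nat) (J K : {set 'I_(p + q)}) : R :=
  (-1) ^+ (#|[set jk in setX J K | jk.2 < jk.1]|
           + #|[set j in J :&: K | p <= j]|)%N.

Definition symdiff (n : nat) (J K : {set 'I_n}) : {set 'I_n} :=
  (J :\: K) :|: (K :\: J).

Definition gmul (R : realType) (p q : nat) (A B : GA R (p + q)) : GA R (p + q) :=
  \sum_(J : {set 'I_(p + q)}) \sum_(K : {set 'I_(p + q)})
     (A J * B K * bsign R J K) *: blade R (symdiff J K).

Definition gone (R : realType) (n : nat) : GA R n := blade R set0.

Definition cset (n : nat) (l : bool) (K : {set 'I_n}) : {set {set 'I_n}} :=
  [set J : {set 'I_n} | odd (#|J| * #|K| - #|J :&: K|)%N == l].

Definition csetB (n d : nat) (k : 'I_d -> {set 'I_n}) (l : {ffun 'I_d -> bool})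
  : {set {set 'I_n}} :=
  \bigcap_(nu : 'I_d) cset (l nu) (k nu).

(* A_{c^0(B)} = (A + B^-1 A B)/2,  A_{c^1(B)} = (A - B^-1 A B)/2,
   where Binv is the inverse of B *)
Definition gproj (R : realType) (p q : nat) (Binv B : GA R (p + q)) (l : bool)
  (A : GA R (p + q)) : GA R (p + q) :=
  (1 / 2 : R) *: (A + (if l then -1 else 1) *: gmul (gmul Binv A) B).

Definition gprojB (R : realType) (p q d : nat) (Binv B : 'I_d -> GA R (p + q))
  (l : {ffun 'I_d -> bool}) (A : GA R (p + q)) : GA R (p + q) :=
  foldl (fun X nu => gproj (Binv nu) (B nu) (l nu) X) A (enum 'I_d).

From HB Require Import structures.
From mathcomp Require Import all_boot all_order all_algebra.
From mathcomp Require Import reals ring.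
Import Order.TTheory GRing.Theory Num.Theory.
Local Open Scope ring_scope.
Set Implicit Arguments. Unset Strict Implicit.

(* Conjugation by a basis blade is diagonal in the blade basis: the inverse of
   e_K is bsign K K e_K, and e_K^-1 e_J e_K = (-1)^(|J||K| - |J :&: K|) e_J,
   the exponent counting the pairs (x, y) in J x K with x != y.  Hence
   A |-> A_{c^l(e_K)} keeps exactly the coordinates a_J with J in c^l(e_K),
   and iterating over the tuple keeps those with J in c^l(B).  The sets
   c^l(B) are the fibres of J |-> (parity of that exponent for each k nu),
   so they partition all multi-indices. *)

Definition anticomm (n : nat) (K J : {set 'I_n}) : bool :=
  odd (#|J| * #|K| - #|J :&: K|).

Lemma in_cset (n : nat) (l : bool) (K J : {set 'I_n}) :
  (J \in cset l K) = (anticomm K J == l).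
Proof. by rewrite inE. Qed.

Section Partition.
Variables (n d : nat) (k : 'I_d -> {set 'I_n}).

Lemma in_csetB l J : (J \in csetB k l) = ([ffun nu => anticomm (k nu) J] == l).
Proof.
apply/bigcapP/eqP => [J_l | <- nu _]; last by rewrite in_cset ffunE.
by apply/ffunP => nu; rewrite ffunE; move: (J_l nu isT); rewrite in_cset => /eqP.
Qed.

Lemma csetB_disjoint l l' : l != l' -> [disjoint csetB k l & csetB k l'].
Proof.
move=> ll'; apply/pred0P => J /=; apply/negbTE; rewrite !in_csetB.
by apply: contra ll' => /andP[/eqP <- /eqP <-].
Qed.

Lemma bigcup_csetB : \bigcup_l csetB k l = [set: {set 'I_n}].
Proof.
apply/setP => J; rewrite inE; apply/bigcupP.
by exists [ffun nu => anticomm (k nu) J]; rewrite // in_csetB.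
Qed.

End Partition.

Section Symdiff.
Variable n : nat.
Implicit Types J K : {set 'I_n}.

Lemma in_symdiff J K x : (x \in symdiff J K) = (x \in J) (+) (x \in K).
Proof. by rewrite !inE; case: (x \in J); case: (x \in K). Qed.

Lemma symdiffK J K : symdiff J (symdiff J K) = K.
Proof. by apply/setP => x; rewrite !in_symdiff addKb. Qed.

Lemma symdiffKr J K : symdiff (symdiff J K) K = J.
Proof. by apply/setP => x; rewrite !in_symdiff addbK. Qed.

Lemma symdiff_eq0 J K : (symdiff J K == set0) = (J == K).
Proof.
apply/eqP/eqP => [/setP JK0 | ->]; apply/setP => x.
  by move: (JK0 x); rewrite in_symdiff inE; case: (x \in J); case: (x \in K).
by rewrite in_symdiff addbb inE.
Qed.

End Symdiff.

Lemma sign_card (R : pzRingType) (T : finType) (A : {set T}) :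
  (-1) ^+ #|A| = \prod_x ((-1) ^+ (x \in A) : R).
Proof.
by rewrite -prodr_const big_mkcond; apply: eq_bigr => x _; case: (x \in A).
Qed.

Lemma card_offdiag (T : finType) (J K : {set T}) :
  #|[set xy in setX J K | xy.1 != xy.2]| = (#|J| * #|K| - #|J :&: K|)%N.
Proof.
pose diag := [set (x, x) | x in J :&: K].
have diag_sub : diag \subset setX J K.
  by apply/subsetP => _ /imsetP[x /setIP[xJ xK] ->]; rewrite inE xJ xK.
have -> : [set xy in setX J K | xy.1 != xy.2] = setX J K :\: diag.
  apply/setP => -[x y]; rewrite !inE /= andbC.
  case/boolP: (x \in J) => xJ; case/boolP: (y \in K) => yK; rewrite ?andbF //=.
  suff -> : ((x, y) \in diag) = (x == y) by [].
  apply/imsetP/eqP => [[z _ [-> ->]] // | eq_xy]; subst y.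
  by exists x; rewrite // inE xJ.
rewrite cardsD cardsX (setIidPr diag_sub) card_imset //.
by move=> x y [->].
Qed.

Lemma sign_anticomm (R : comPzRingType) (n : nat) (K J : {set 'I_n}) :
  (-1) ^+ anticomm K J =
  \prod_x \prod_y ((-1) ^+ [&& x \in J, y \in K & x != y] : R).
Proof.
rewrite /anticomm signr_odd -card_offdiag sign_card pair_big /=.
by apply: eq_bigr => -[x y] _; rewrite !inE andbA.
Qed.

Section Sign.
Variables (R : realType) (p q : nat).
Local Notation n := (p + q)%N.
Implicit Types J K : {set 'I_n}.

Lemma bsign_prod J K : bsign R J K =
  \prod_x ((\prod_y (-1) ^+ [&& x \in J, y \in K & (y < x)%N]) *
           (-1) ^+ [&& x \in J, x \in K & (p <= x)%N]).
Proof.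
rewrite big_split /= /bsign exprD !sign_card pair_big /=.
by congr (_ * _); apply: eq_bigr => ? _; rewrite !inE ?andbA.
Qed.

Lemma bsign_conj J K :
  bsign R K K * bsign R K J * bsign R (symdiff K J) K = (-1) ^+ anticomm K J.
Proof.
have regroup (a b c d e f : R) : a * b * (c * d) * (e * f) = a * c * e * (b * d * f).
  by ring.
have split_neq x y : (-1) ^+ [&& x \in J, y \in K & x != y] =
    (-1) ^+ [&& x \in J, y \in K & (y < x)%N] *
    (-1) ^+ [&& x \in J, y \in K & (x < y)%N] :> R.
  rewrite -signr_addb -val_eqE neq_ltn /=.
  by case: (x \in J); case: (y \in K); case: ltngtP.
rewrite sign_anticomm; under eq_bigr do under eq_bigr do rewrite split_neq.
under eq_bigr do rewrite big_split.
rewrite big_split /= [X in _ = _ * X]exchange_big /= -big_split /=.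
rewrite !bsign_prod -!big_split /=; apply: eq_bigr => x _.
(* The factors coming from squares of generators cancel; the ordered-pair factors
   recombine into those of the pairs (x, y) in J x K with x != y. *)
rewrite regroup -!signr_addb.
have -> : [&& x \in K, x \in K & (p <= x)%N] (+) [&& x \in K, x \in J & (p <= x)%N]
    (+) [&& x \in symdiff K J, x \in K & (p <= x)%N] = false.
  by rewrite in_symdiff; case: (x \in K); case: (x \in J); case: (p <= x)%N.
rewrite mulr1 -!big_split /=; apply: eq_bigr => y _; rewrite -!signr_addb in_symdiff.
by case: (x \in K); case: (x \in J); case: (y \in K); case: (y \in J); case: (y < x)%N.
Qed.

End Sign.

Section Coefficients.
Variables (R : realType) (n : nat).
Implicit Types (J K : {set 'I_n}) (S : {set {set 'I_n}}) (X A : GA R n).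

Lemma bladeE K J : blade R K J = (J == K)%:R.
Proof. by rewrite ffunE. Qed.

Lemma coefZ (a : R) X J : (a *: X) J = a * X J.
Proof. by rewrite ffunE. Qed.

Definition grestrict S A : GA R n := [ffun J => if J \in S then A J else 0].

Lemma grestrictT A : grestrict setT A = A.
Proof. by apply/ffunP => J; rewrite ffunE inE. Qed.

Lemma sum_blade S A : \sum_(J in S) A J *: blade R J = grestrict S A.
Proof.
apply/ffunP => J0; rewrite sum_ffunE ffunE.
under eq_bigr do rewrite coefZ bladeE.
case: (boolP (J0 \in S)) => J0S.
  rewrite (bigD1 J0) //= eqxx mulr1 big1 ?addr0 // => J /andP[_ JJ0].
  by rewrite eq_sym (negbTE JJ0) mulr0.
apply: big1 => J JS; have /negbTE -> : J0 != J by apply: contraNneq J0S => ->.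
by rewrite mulr0.
Qed.

End Coefficients.

Section Blades.
Variables (R : realType) (p q : nat).
Local Notation n := (p + q)%N.
Implicit Types (J K : {set 'I_n}) (S : {set {set 'I_n}}) (X Y A : GA R n).

Lemma coef_gmul X Y J0 :
  gmul X Y J0 = \sum_J (X J : R) * Y (symdiff J J0) * bsign R J (symdiff J J0).
Proof.
rewrite /gmul sum_ffunE; apply: eq_bigr => J _.
rewrite sum_ffunE (bigD1 (symdiff J J0)) //= big1 ?addr0 => [|K JK].
  by rewrite coefZ bladeE symdiffK eqxx mulr1.
rewrite coefZ bladeE; case: eqP => [JKJ0|]; last by rewrite mulr0.
by move: JK; rewrite JKJ0 symdiffK eqxx.
Qed.

Lemma coef_gmul_bladel (c : R) K X J0 :
  gmul (c *: blade R K) X J0 = c * X (symdiff K J0) * bsign R K (symdiff K J0).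
Proof.
rewrite coef_gmul (bigD1 K) //= big1 ?addr0 => [|J /negbTE JK].
  by rewrite coefZ bladeE eqxx mulr1.
by rewrite coefZ bladeE JK mulr0 !mul0r.
Qed.

Lemma coef_gmul_blader K X J0 :
  gmul X (blade R K) J0 = X (symdiff K J0) * bsign R (symdiff K J0) K.
Proof.
rewrite coef_gmul (bigD1 (symdiff K J0)) //= big1 ?addr0 => [|J JK].
  by rewrite symdiffKr bladeE eqxx mulr1.
rewrite bladeE; case: eqP => [JJ0K|]; last by rewrite mulr0 mul0r.
by move: JK; rewrite -JJ0K symdiffKr eqxx.
Qed.

Lemma blade_rinv K (Binv : GA R n) :
  gmul (blade R K) Binv = gone R n -> Binv = bsign R K K *: blade R K.
Proof.
move=> KBinv; apply/ffunP => J; rewrite coefZ bladeE.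
have := congr1 (fun Y : GA R n => Y (symdiff K J)) KBinv.
rewrite /= /gone -[blade R K]scale1r coef_gmul_bladel symdiffK bladeE symdiff_eq0 mul1r.
move=> /(congr1 (fun x => bsign R K J * x)); rewrite [Binv J * _]mulrC {1}/bsign signrMK => ->.
by rewrite eq_sym; case: eqP => [-> | _]; rewrite ?mulr0 // mulrC.
Qed.

Lemma coef_conj_blade K A J :
  gmul (gmul (bsign R K K *: blade R K) A) (blade R K) J = (-1) ^+ anticomm K J * A J.
Proof.
by rewrite coef_gmul_blader coef_gmul_bladel symdiffK -bsign_conj; ring.
Qed.

Lemma gproj_grestrict K l S A :
  gproj (bsign R K K *: blade R K) (blade R K) l (grestrict S A)
  = grestrict (S :&: cset l K) A.
Proof.
apply/ffunP => J; rewrite /gproj coefZ ffunE coefZ coef_conj_blade !ffunE in_setI in_cset.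
case: (J \in S) => /=; last by rewrite !mulr0 addr0 mulr0.
by case: l; case: anticomm => /=; field.
Qed.

Lemma gprojB_grestrict d (k : 'I_d -> {set 'I_n}) (Binv : 'I_d -> GA R n)
    (Binv_k : forall nu, Binv nu = bsign R (k nu) (k nu) *: blade R (k nu)) l S A :
  gprojB Binv (fun nu => blade R (k nu)) l (grestrict S A)
  = grestrict (S :&: csetB k l) A.
Proof.
rewrite /gprojB /csetB -big_enum; elim: (enum _) S => [|nu s IHs] S /=.
  by rewrite big_nil setIT.
by rewrite Binv_k gproj_grestrict IHs big_cons setIA.
Qed.

End Blades.

Theorem lemma3p11 (R : realType) (p q d : nat) (k : 'I_d -> {set 'I_(p + q)})
  (Binv : 'I_d -> GA R (p + q))
  (hinv : forall nu : 'I_d,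
      gmul (Binv nu) (blade R (k nu)) = gone R (p + q) /\
      gmul (blade R (k nu)) (Binv nu) = gone R (p + q))
  (A : GA R (p + q)) :
  (forall l l' : {ffun 'I_d -> bool}, l != l' -> [disjoint csetB k l & csetB k l'])
  /\ \bigcup_(l : {ffun 'I_d -> bool}) csetB k l = [set: {set 'I_(p + q)}]
  /\ (forall l : {ffun 'I_d -> bool},
        gprojB Binv (fun nu => blade R (k nu)) l A
        = \sum_(J in csetB k l) A J *: blade R J).
Proof.
have Binv_k nu : Binv nu = bsign R (k nu) (k nu) *: blade R (k nu).
  by apply: blade_rinv; case: (hinv nu).
split; first exact: csetB_disjoint.
split; first exact: bigcup_csetB.
by move=> l; rewrite sum_blade -[A in LHS]grestrictT gprojB_grestrict // setTI.
Qed.
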